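(* Let $\mathbf D$ be a maximal (by inclusion) clique of tilings, i.e. a set of pairwise compatible tilings not properly contained in another set of pairwise compatible tilings. Then $\mathbf D$ is a distributive sublattice of the poset of tilings ordered by inclusion; that is, $\mathbf D$ is closed under $\cap$ and $\cup$.
   Context: Fix an integer $n\ge 3$ and write $[n]=\{1,\dots,n\}$. Let $\Lambda$ be the set of 3-element subsets of $[n]$; a triple $\{i,j,k\}$ with $i<j<k$ is written $ijk$. For a 4-element subset $F=\{i<j<k<l\}$ of $[n]$, the stick of $F$ is the sequence $(ijk,\ ijl,\ ikl,\ jkl)$. A tiling (the inversion set of a rhombus tiling of the zonogon $Z(n;2)$) is a subset $T\subseteq\Lambda$ such that for every 4-element $F\subseteq[n]$, $T\cap\mathrm{stick}(F)$ is an initial segment or a final segment of the stick (empty set and whole stick allowed). Two tilings $T,T'$ are compatible if both $T\cap T'$ and $T\cup T'$ are tilings. *)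

(* [n] = {1..n} is represented by 'I_n = {0..n-1}
   (order-preserving relabelling i |-> i-1). *)
From mathcomp Require Import all_boot.
Set Implicit Arguments. Unset Strict Implicit. Unset Printing Implicit Defensive.

Section Tilings.
Variable n : nat.

Definition Lambda : {set {set 'I_n}} := [set A : {set 'I_n} | #|A| == 3].

Definition stick (i j k l : 'I_n) : seq {set 'I_n} :=
  [:: [set i; j; k]; [set i; j; l]; [set i; k; l]; [set j; k; l]].

Definition segment_ok (T : {set {set 'I_n}}) (st : seq {set 'I_n}) : Prop :=
  exists m : nat, m <= size st /\
    ([seq x <- st | x \in T] = take m st \/ [seq x <- st | x \in T] = drop m st).

Definition tiling (T : {set {set 'I_n}}) : Prop :=
  T \subset Lambda /\
  forall i j k l : 'I_n, i < j -> j < k -> k < l -> segment_ok T (stick i j k l).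

Definition compatible (T T' : {set {set 'I_n}}) : Prop :=
  tiling (T :&: T') /\ tiling (T :|: T').

Definition clique (D : {set {set {set 'I_n}}}) : Prop :=
  (forall T, T \in D -> tiling T) /\
  (forall T T', T \in D -> T' \in D -> compatible T T').

Definition maximal_clique (D : {set {set {set 'I_n}}}) : Prop :=
  clique D /\ forall D', clique D' -> D \subset D' -> D' = D.

End Tilings.

From mathcomp Require Import all_boot.
Set Implicit Arguments. Unset Strict Implicit. Unset Printing Implicit Defensive.

(* On a stick F, a set T of triples is recorded by the 4-bit pattern telling which
   triples of F lie in T; T is a tiling iff every such pattern is an initial or a
   final segment.  A finite check on patterns shows that if A, B, C are pairwise
   compatible and C is a tiling, then A :&: B and A :|: B are again compatible
   with C; the statements about joins are the duals of those about meets, since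
   complementing a pattern exchanges initial and final segments.  So T :&: T' and
   T :|: T' are compatible with every member of D, and maximality of D puts them
   in D. *)

Definition segment_pattern (a1 a2 a3 a4 : bool) : bool :=
  [&& a2 ==> a1, a3 ==> a2 & a4 ==> a3] || [&& a1 ==> a2, a2 ==> a3 & a3 ==> a4].

Lemma segment_pattern_neg (a1 a2 a3 a4 : bool) :
  segment_pattern (~~ a1) (~~ a2) (~~ a3) (~~ a4) = segment_pattern a1 a2 a3 a4.
Proof. by move: a1 a2 a3 a4; do 4 case. Qed.

Lemma segment_pattern_meet3 (a1 a2 a3 a4 b1 b2 b3 b4 c1 c2 c3 c4 : bool) :
  segment_pattern (a1 && b1) (a2 && b2) (a3 && b3) (a4 && b4) ->
  segment_pattern (a1 && c1) (a2 && c2) (a3 && c3) (a4 && c4) ->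
  segment_pattern (b1 && c1) (b2 && c2) (b3 && c3) (b4 && c4) ->
  segment_pattern (a1 && b1 && c1) (a2 && b2 && c2) (a3 && b3 && c3) (a4 && b4 && c4).
Proof. by move: a1 a2 a3 a4 b1 b2 b3 b4 c1 c2 c3 c4; do 12 case. Qed.

Lemma segment_pattern_meet_join (a1 a2 a3 a4 b1 b2 b3 b4 c1 c2 c3 c4 : bool) :
  segment_pattern c1 c2 c3 c4 ->
  segment_pattern (a1 && b1) (a2 && b2) (a3 && b3) (a4 && b4) ->
  segment_pattern (a1 || c1) (a2 || c2) (a3 || c3) (a4 || c4) ->
  segment_pattern (b1 || c1) (b2 || c2) (b3 || c3) (b4 || c4) ->
  segment_pattern (a1 && b1 || c1) (a2 && b2 || c2) (a3 && b3 || c3) (a4 && b4 || c4).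
Proof. by move: a1 a2 a3 a4 b1 b2 b3 b4 c1 c2 c3 c4; do 12 case. Qed.

Lemma segment_pattern_join3 (a1 a2 a3 a4 b1 b2 b3 b4 c1 c2 c3 c4 : bool) :
  segment_pattern (a1 || b1) (a2 || b2) (a3 || b3) (a4 || b4) ->
  segment_pattern (a1 || c1) (a2 || c2) (a3 || c3) (a4 || c4) ->
  segment_pattern (b1 || c1) (b2 || c2) (b3 || c3) (b4 || c4) ->
  segment_pattern (a1 || b1 || c1) (a2 || b2 || c2) (a3 || b3 || c3) (a4 || b4 || c4).
Proof.
move=> hab hac hbc; rewrite -segment_pattern_neg !negb_or.
by apply: segment_pattern_meet3; rewrite -!negb_or segment_pattern_neg.
Qed.

Lemma segment_pattern_join_meet (a1 a2 a3 a4 b1 b2 b3 b4 c1 c2 c3 c4 : bool) :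
  segment_pattern c1 c2 c3 c4 ->
  segment_pattern (a1 || b1) (a2 || b2) (a3 || b3) (a4 || b4) ->
  segment_pattern (a1 && c1) (a2 && c2) (a3 && c3) (a4 && c4) ->
  segment_pattern (b1 && c1) (b2 && c2) (b3 && c3) (b4 && c4) ->
  segment_pattern ((a1 || b1) && c1) ((a2 || b2) && c2) ((a3 || b3) && c3) ((a4 || b4) && c4).
Proof.
move=> hc hab hac hbc; rewrite -segment_pattern_neg !negb_and !negb_or.
by apply: segment_pattern_meet_join; rewrite -?negb_or -?negb_and segment_pattern_neg.
Qed.

Section Tilings.
Variable n : nat.
Implicit Types (T A B C : {set {set 'I_n}}) (i j k l : 'I_n).

Lemma stick_uniq i j k l : i < j -> j < k -> k < l -> uniq (stick i j k l).
Proof.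
move=> ij jk kl; have ik := ltn_trans ij jk; have jl := ltn_trans jk kl.
have il := ltn_trans ij jl.
have ne (a b : 'I_n) : a < b -> ((a == b) = false) * ((b == a) = false).
  by move=> ab; rewrite -!val_eqE /= ltn_eqF // gtn_eqF.
apply: (@map_uniq _ _ (fun A : {set 'I_n} => [:: i \in A; j \in A; k \in A; l \in A])).
by rewrite /= !inE !eqxx !(ne _ _ ij, ne _ _ jk, ne _ _ kl, ne _ _ ik, ne _ _ jl, ne _ _ il).
Qed.

Lemma segment_okP T (s : seq {set 'I_n}) :
  reflect (segment_ok T s)
    (has (fun m => ([seq x <- s | x \in T] == take m s) || ([seq x <- s | x \in T] == drop m s))
         (iota 0 (size s).+1)).
Proof.
apply: (iffP hasP) => [[m] | [m [sm e]]].
  by rewrite mem_iota ltnS => sm /orP[] /eqP e; exists m; split=> //; [left | right].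
by exists m; rewrite ?mem_iota ?ltnS //; case: e => ->; rewrite eqxx ?orbT.
Qed.

Lemma segment_okE T x1 x2 x3 x4 : uniq [:: x1; x2; x3; x4] ->
  segment_ok T [:: x1; x2; x3; x4] <->
  segment_pattern (x1 \in T) (x2 \in T) (x3 \in T) (x4 \in T).
Proof.
rewrite /= !inE !negb_or => /and4P[/and3P[n12 n13 n14] /andP[n23 n24] n34 _].
have ne (x y : {set 'I_n}) : x != y -> ((x == y) = false) * ((y == x) = false).
  by move=> /negbTE xy; rewrite [y == x]eq_sym xy.
apply: (iff_trans (rwP (segment_okP _ _))) => /=.
case: (x1 \in T); case: (x2 \in T); case: (x3 \in T); case: (x4 \in T);
by rewrite ?eqseq_cons ?eqxx ?(ne _ _ n12, ne _ _ n13, ne _ _ n14, ne _ _ n23, ne _ _ n24, ne _ _ n34).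
Qed.

Definition stick_pattern T i j k l : bool :=
  segment_pattern ([set i; j; k] \in T) ([set i; j; l] \in T) ([set i; k; l] \in T)
    ([set j; k; l] \in T).

Lemma tilingP T :
  tiling T <-> T \subset Lambda n /\
    forall i j k l, i < j -> j < k -> k < l -> stick_pattern T i j k l.
Proof.
split=> -[sub seg]; split=> // i j k l ij jk kl.
all: exact/(segment_okE _ (stick_uniq ij jk kl))/seg.
Qed.

Lemma tiling_meet3 A B C :
  tiling (A :&: B) -> tiling (A :&: C) -> tiling (B :&: C) -> tiling (A :&: B :&: C).
Proof.
move=> /tilingP[sAB pAB] /tilingP[_ pAC] /tilingP[_ pBC]; apply/tilingP; split.
  exact: subset_trans (subsetIl _ _) sAB.
move=> i j k l ij jk kl.
move: (pAB _ _ _ _ ij jk kl) (pAC _ _ _ _ ij jk kl) (pBC _ _ _ _ ij jk kl).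
rewrite /stick_pattern !in_setI; exact: segment_pattern_meet3.
Qed.

Lemma tiling_join3 A B C :
  tiling (A :|: B) -> tiling (A :|: C) -> tiling (B :|: C) -> tiling (A :|: B :|: C).
Proof.
move=> /tilingP[sAB pAB] /tilingP[sAC pAC] /tilingP[_ pBC]; apply/tilingP; split.
  by rewrite subUset sAB (subset_trans (subsetUr _ _) sAC).
move=> i j k l ij jk kl.
move: (pAB _ _ _ _ ij jk kl) (pAC _ _ _ _ ij jk kl) (pBC _ _ _ _ ij jk kl).
rewrite /stick_pattern !in_setU; exact: segment_pattern_join3.
Qed.

Lemma tiling_meet_join A B C : tiling C ->
  tiling (A :&: B) -> tiling (A :|: C) -> tiling (B :|: C) -> tiling (A :&: B :|: C).
Proof.
move=> /tilingP[sC pC] /tilingP[sAB pAB] /tilingP[_ pAC] /tilingP[_ pBC].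
apply/tilingP; split; first by rewrite subUset sAB sC.
move=> i j k l ij jk kl.
move: (pC _ _ _ _ ij jk kl) (pAB _ _ _ _ ij jk kl) (pAC _ _ _ _ ij jk kl) (pBC _ _ _ _ ij jk kl).
rewrite /stick_pattern !(in_setI, in_setU); exact: segment_pattern_meet_join.
Qed.

Lemma tiling_join_meet A B C : tiling C ->
  tiling (A :|: B) -> tiling (A :&: C) -> tiling (B :&: C) -> tiling ((A :|: B) :&: C).
Proof.
move=> /tilingP[sC pC] /tilingP[_ pAB] /tilingP[_ pAC] /tilingP[_ pBC].
apply/tilingP; split; first exact: subset_trans (subsetIr _ _) sC.
move=> i j k l ij jk kl.
move: (pC _ _ _ _ ij jk kl) (pAB _ _ _ _ ij jk kl) (pAC _ _ _ _ ij jk kl) (pBC _ _ _ _ ij jk kl).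
rewrite /stick_pattern !(in_setI, in_setU); exact: segment_pattern_join_meet.
Qed.

Lemma compatible_sym A B : compatible A B -> compatible B A.
Proof. by rewrite /compatible setIC setUC. Qed.

Lemma compatible_meet A B C : tiling C ->
  compatible A B -> compatible A C -> compatible B C -> compatible (A :&: B) C.
Proof.
move=> tC [tAB _] [tAC uAC] [tBC uBC].
by split; [exact: tiling_meet3 | exact: tiling_meet_join].
Qed.

Lemma compatible_join A B C : tiling C ->
  compatible A B -> compatible A C -> compatible B C -> compatible (A :|: B) C.
Proof.
move=> tC [_ uAB] [tAC uAC] [tBC uBC].
by split; [exact: tiling_join_meet | exact: tiling_join3].
Qed.

Lemma maximal_clique_mem (D : {set {set {set 'I_n}}}) A :
  maximal_clique D -> tiling A -> (forall S, S \in D -> compatible A S) -> A \in D.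
Proof.
move=> [[tD cD] maxD] tA cA.
suff clA : clique (A |: D) by rewrite -(maxD _ clA (subsetUr _ _)) setU11.
split=> [T | T T']; first by case/setU1P=> [-> | /tD].
case/setU1P=> [-> | DT] /setU1P[-> | DT'].
- by rewrite /compatible setIid setUid.
- exact: cA.
- exact/compatible_sym/cA.
- exact: cD.
Qed.

End Tilings.

Theorem mainTheorem10 (n : nat) (D : {set {set {set 'I_n}}}) :
  3 <= n -> maximal_clique D ->
  forall T T', T \in D -> T' \in D -> (T :&: T' \in D) /\ (T :|: T' \in D).
Proof.
(* The argument is stickwise and never uses [3 <= n]. *)
move=> _ maxD T T' DT DT'; have [[tD cD] _] := maxD.
have cTT' := cD _ _ DT DT'; have [tI tU] := cTT'.
split; apply: maximal_clique_mem => // S DS.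
  exact: compatible_meet (tD _ DS) cTT' (cD _ _ DT DS) (cD _ _ DT' DS).
exact: compatible_join (tD _ DS) cTT' (cD _ _ DT DS) (cD _ _ DT' DS).
Qed.
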